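(* There exist a map $v:\mathbb Z^2\to\mathbb R^2$, constants $0<m\le M<\infty$, and a constant $r>0$ such that: $v(x)\ne v(y)$ for all distinct $x,y\in\mathbb Z^2$; $m\le\|v(x)\|\le M$ for all $x\in\mathbb Z^2$; and for all distinct $x,y\in\mathbb Z^2$, \[\inf_{t\in\mathbb R}\|(x+t v(x))-(y+t v(y))\|\ge r .\] Consequently, closed disks of any radius $\rho<r/2$ centered at the moving points $x+tv(x)$, $x\in\mathbb Z^2$, are pairwise disjoint for every $t\in\mathbb R$.
   Context: $\|\cdot\|$ is the Euclidean norm on $\mathbb R^2$. Each point $x\in\mathbb Z^2$ moves as $x(t)=x+tv(x)$, $t\in\mathbb R$. *)

From Stdlib Require Import Reals ZArith.
Open Scope R_scope.

Definition R2 : Type := (R * R)%type.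
Definition Z2 : Type := (Z * Z)%type.

Definition enorm (p : R2) : R := sqrt (fst p ^ 2 + snd p ^ 2).

Definition embZ2 (x : Z2) : R2 := (IZR (fst x), IZR (snd x)).

Definition mpos (v : Z2 -> R2) (x : Z2) (t : R) : R2 :=
  (IZR (fst x) + t * fst (v x), IZR (snd x) + t * snd (v x)).

Definition sub2 (p q : R2) : R2 := (fst p - fst q, snd p - snd q).

Definition closed_disk (c : R2) (rho : R) (z : R2) : Prop :=
  enorm (sub2 z c) <= rho.

(** The velocity field is v(x1, x2) = (f x2, - f x1) with f = 3 + atan, which is
    strictly increasing with values in (1, 5).  For x <> y put d = (f x1 - f y1,
    f x2 - f y2).  The relative velocity v x - v y = (d2, - d1) is orthogonal to d,
    so the scalar product of d with the relative position x(t) - y(t) is the constant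
    (x1 - y1) d1 + (x2 - y2) d2.  As f is increasing and integers differ by at least
    1, this constant is at least |d1| + |d2| > 0, which forbids x(t) - y(t) from
    entering the open square (-1, 1)^2: the points stay at distance at least 1. *)

From Stdlib Require Import Reals ZArith Lra Lia Psatz.
Open Scope R_scope.

Lemma Rabs_le_sqrt_sum_sq (a b : R) : Rabs a <= sqrt (a ^ 2 + b ^ 2).
Proof.
  rewrite <- sqrt_Rsqr_abs. apply sqrt_le_1_alt. unfold Rsqr. nra.
Qed.

Lemma Rabs_le_enorm (p : R2) : Rabs (fst p) <= enorm p /\ Rabs (snd p) <= enorm p.
Proof.
  unfold enorm. split; [apply Rabs_le_sqrt_sum_sq|].
  rewrite Rplus_comm. apply Rabs_le_sqrt_sum_sq.
Qed.

Lemma enorm_sub2_sym (p q : R2) : enorm (sub2 p q) = enorm (sub2 q p).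
Proof. unfold enorm, sub2; simpl. f_equal. ring. Qed.

Lemma enorm_sub2_triangle (p q z : R2) :
  enorm (sub2 p q) <= enorm (sub2 p z) + enorm (sub2 z q).
Proof.
  destruct p as [p1 p2], q as [q1 q2], z as [z1 z2]; unfold enorm, sub2; cbn [fst snd].
  set (a := p1 - z1); set (b := p2 - z2); set (c := z1 - q1); set (d := z2 - q2).
  replace (p1 - q1) with (a + c) by (unfold a, c; ring).
  replace (p2 - q2) with (b + d) by (unfold b, d; ring).
  assert (Hab : 0 <= a ^ 2 + b ^ 2) by nra.
  assert (Hcd : 0 <= c ^ 2 + d ^ 2) by nra.
  assert (cauchy_schwarz : a * c + b * d <= sqrt (a ^ 2 + b ^ 2) * sqrt (c ^ 2 + d ^ 2)).
  { rewrite <- sqrt_mult by assumption.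
    eapply Rle_trans; [apply Rle_abs|].
    rewrite <- sqrt_Rsqr_abs. apply sqrt_le_1_alt. unfold Rsqr.
    pose proof (pow2_ge_0 (a * d - b * c)). nra. }
  pose proof (sqrt_pos (a ^ 2 + b ^ 2)). pose proof (sqrt_pos (c ^ 2 + d ^ 2)).
  rewrite <- (sqrt_square (sqrt (a ^ 2 + b ^ 2) + sqrt (c ^ 2 + d ^ 2))) by lra.
  apply sqrt_le_1_alt.
  pose proof (sqrt_sqrt _ Hab). pose proof (sqrt_sqrt _ Hcd). nra.
Qed.

Lemma closed_disks_disjoint (p q : R2) (r rho : R) :
  r <= enorm (sub2 p q) -> rho < r / 2 ->
  forall z : R2, ~ (closed_disk p rho z /\ closed_disk q rho z).
Proof.
  unfold closed_disk. intros Hr Hrho z [Dp Dq].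
  pose proof (enorm_sub2_triangle p q z). rewrite (enorm_sub2_sym p z) in *. lra.
Qed.

Lemma square_exit (u w e1 e2 : R) :
  (e1 <> 0 \/ e2 <> 0) -> Rabs e1 + Rabs e2 <= u * e1 + w * e2 ->
  1 <= Rabs u \/ 1 <= Rabs w.
Proof.
  intros Hnz Hdot.
  destruct (Rle_or_lt 1 (Rabs u)) as [Hu|Hu]; [now left|].
  destruct (Rle_or_lt 1 (Rabs w)) as [Hw|Hw]; [now right|].
  exfalso.
  assert (Hprod : u * e1 + w * e2 <= Rabs u * Rabs e1 + Rabs w * Rabs e2).
  { rewrite <- !Rabs_mult. eapply Rle_trans; [apply Rle_abs|apply Rabs_triang]. }
  pose proof (Rabs_pos u). pose proof (Rabs_pos w).
  pose proof (Rabs_pos e1). pose proof (Rabs_pos e2).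
  destruct Hnz as [Hn|Hn]; pose proof (Rabs_pos_lt _ Hn); nra.
Qed.

Lemma increasing_Z_gap (g : R -> R) :
  (forall x y, x < y -> g x < g y) ->
  forall a b : Z,
    Rabs (g (IZR a) - g (IZR b)) <= (IZR a - IZR b) * (g (IZR a) - g (IZR b)).
Proof.
  intros Hg a b.
  destruct (Z.lt_trichotomy a b) as [H|[H|H]].
  - assert (IZR a + 1 <= IZR b) by (rewrite <- plus_IZR; apply IZR_le; lia).
    assert (g (IZR a) < g (IZR b)) by (apply Hg; lra).
    rewrite Rabs_left by lra. nra.
  - subst. rewrite Rminus_diag, Rabs_R0. lra.
  - assert (IZR b + 1 <= IZR a) by (rewrite <- plus_IZR; apply IZR_le; lia).
    assert (g (IZR b) < g (IZR a)) by (apply Hg; lra).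
    rewrite Rabs_right by lra. nra.
Qed.

Definition speed (n : Z) : R := 3 + atan (IZR n).

Definition velocity (x : Z2) : R2 := (speed (snd x), - speed (fst x)).

Lemma speed_bounds (n : Z) : 1 < speed n < 5.
Proof.
  unfold speed. pose proof (atan_bound (IZR n)). pose proof PI_4. lra.
Qed.

Lemma speed_gap (a b : Z) :
  Rabs (speed a - speed b) <= (IZR a - IZR b) * (speed a - speed b).
Proof.
  apply (increasing_Z_gap (fun s => 3 + atan s)).
  intros s s' H. pose proof (atan_increasing s s' H). lra.
Qed.

Lemma speed_inj (a b : Z) : speed a = speed b -> a = b.
Proof.
  intro E. destruct (Z.lt_trichotomy a b) as [H|[H|H]]; [|assumption|];
    apply IZR_lt, atan_increasing in H; unfold speed in E; lra.
Qed.

Lemma velocity_inj (x y : Z2) : velocity x = velocity y -> x = y.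
Proof.
  destruct x as [x1 x2], y as [y1 y2]; unfold velocity; simpl.
  intro E. injection E as E2 E1.
  rewrite (speed_inj x2 y2 E2), (speed_inj x1 y1) by lra. reflexivity.
Qed.

Lemma enorm_velocity (x : Z2) : 1 <= enorm (velocity x) <= 8.
Proof.
  destruct x as [x1 x2]; unfold enorm, velocity; cbn [fst snd].
  destruct (speed_bounds x1), (speed_bounds x2).
  split.
  - rewrite <- sqrt_1. apply sqrt_le_1_alt. nra.
  - rewrite <- (sqrt_square 8) by lra. apply sqrt_le_1_alt. nra.
Qed.

Lemma velocity_separation (x y : Z2) (t : R) :
  x <> y -> 1 <= enorm (sub2 (mpos velocity x t) (mpos velocity y t)).
Proof.
  destruct x as [x1 x2], y as [y1 y2]; intro Hxy.
  set (d1 := speed x1 - speed y1); set (d2 := speed x2 - speed y2).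
  assert (Hnz : d1 <> 0 \/ d2 <> 0).
  { destruct (Req_dec d1 0) as [E1|]; [|now left].
    destruct (Req_dec d2 0) as [E2|]; [|now right].
    exfalso. apply Hxy. unfold d1, d2 in *.
    rewrite (speed_inj x1 y1), (speed_inj x2 y2) by lra. reflexivity. }
  assert (Hdot : Rabs d1 + Rabs d2 <=
      (IZR x1 - IZR y1 + t * d2) * d1 + (IZR x2 - IZR y2 - t * d1) * d2).
  { pose proof (speed_gap x1 y1). pose proof (speed_gap x2 y2).
    unfold d1, d2 in *. nra. }
  set (c := sub2 (mpos velocity (x1, x2) t) (mpos velocity (y1, y2) t)).
  assert (E1 : fst c = IZR x1 - IZR y1 + t * d2).
  { unfold c, d2, sub2, mpos, velocity; cbn [fst snd]; ring. }
  assert (E2 : snd c = IZR x2 - IZR y2 - t * d1).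
  { unfold c, d1, sub2, mpos, velocity; cbn [fst snd]; ring. }
  pose proof (Rabs_le_enorm c) as [N1 N2]. rewrite E1 in N1. rewrite E2 in N2.
  destruct (square_exit _ _ _ _ Hnz Hdot); lra.
Qed.

Theorem corollary3 :
  exists (v : Z2 -> R2) (m M r : R),
    0 < m /\ m <= M /\ 0 < r /\
    (forall x y : Z2, x <> y -> v x <> v y) /\
    (forall x : Z2, m <= enorm (v x) <= M) /\
    (* inf_t ||x(t) - y(t)|| >= r, i.e. r is a lower bound of all these values *)
    (forall x y : Z2, x <> y ->
       forall t : R, r <= enorm (sub2 (mpos v x t) (mpos v y t))) /\
    (* consequence: closed disks of radius rho < r/2 stay pairwise disjoint *)
    (forall rho : R, rho < r / 2 ->
       forall (t : R) (x y : Z2), x <> y ->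
       forall z : R2, ~ (closed_disk (mpos v x t) rho z /\ closed_disk (mpos v y t) rho z)).
Proof.
  exists velocity, 1, 8, 1.
  repeat split; try lra.
  - intros x y Hxy E. exact (Hxy (velocity_inj x y E)).
  - apply enorm_velocity.
  - apply enorm_velocity.
  - intros x y Hxy t. exact (velocity_separation x y t Hxy).
  - intros rho Hrho t x y Hxy.
    exact (closed_disks_disjoint _ _ 1 rho (velocity_separation x y t Hxy) Hrho).
Qed.
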